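(* Let $f\in\mathcal A$ be such that $$\frac{z}{f(z)}=1+b_1z+\sum_{n=2}^\infty(-1)^nb_nz^n,\qquad z\in\mathbb D,$$ where $b_1\in\mathbb C$ and $b_n\ge0$ for $n\ge2$. Then $f$ is univalent in $\mathbb D$ if and only if $\sum_{n=2}^\infty(n-1)b_n\le 1$.
   Context: $\mathbb D=\{z\in\mathbb C:|z|<1\}$. $\mathcal A$ is the class of functions $f$ analytic in $\mathbb D$ with $f(z)=z+\sum_{k\ge2}a_kz^k$. *)

From Stdlib Require Import Reals.
From Coquelicot Require Import Coquelicot.
Open Scope C_scope.

Definition in_disk (z : C) : Prop := (Cmod z < 1)%R.

Definition is_cderiv (f : C -> C) (z l : C) : Prop :=
  @is_derive C_AbsRing C_NormedModule f z l.

Definition analytic_in_disk (f : C -> C) : Prop :=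
  forall z, in_disk z -> exists l, is_cderiv f z l.

Definition classA (f : C -> C) : Prop :=
  analytic_in_disk f /\ f 0 = 0 /\ is_cderiv f 0 1.

Definition univalent_in_disk (f : C -> C) : Prop :=
  forall z w, in_disk z -> in_disk w -> f z = f w -> z = w.

(* coefficients of z/f(z) = 1 + b1 z + sum_{n>=2} (-1)^n b_n z^n *)
Definition zf_coef (b1 : C) (b : nat -> R) (n : nat) : C :=
  match n with
  | O => 1
  | S O => b1
  | _ => RtoC ((-1) ^ n * b n)%R
  end.

From Stdlib Require Import Reals Lra Lia Psatz.
From Coquelicot Require Import Coquelicot.
Open Scope C_scope.
Set Bullet Behavior "Strict Subproofs".

(* With g(z) = z / f(z), comparing coefficients gives
     |z g(w) - w g(z) - (z - w)| <= |z| |w| |z - w| sum_{n>=2} (n-1) b_n,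
   and z g(w) = w g(z) exactly when f(z) = f(w).  So if the sum is at most 1,
   f is injective on the punctured disk, and the same bound, applied near a
   putative zero of f, shows f has no zero there.  Conversely, on the negative
   axis (-s)/f(-s) = 1 - b_1 s + A(s) with A(s) = sum_{n>=2} b_n s^n, and
   f(-s) = f(-r) iff s (1 + A(r)) = r (1 + A(s)).  Univalence therefore forces
   r A'(r) - A(r) = sum_{n>=2} (n-1) b_n r^n <= 1 for every r < 1, and letting
   r tend to 1 gives the bound. *)

Definition zf_weight (b : nat -> R) (n : nat) : R := (INR (n + 1) * b (n + 2)%nat)%R.

Lemma Cinv_0 : / 0 = 0.
Proof.
  unfold Cinv; simpl. unfold Rdiv.
  replace (0 * (0 * 1) + 0 * (0 * 1))%R with 0%R by ring. rewrite Rinv_0.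
  apply injective_projections; simpl; ring.
Qed.

Lemma Cdiv_0_r (z : C) : z / 0 = 0.
Proof. unfold Cdiv. rewrite Cinv_0. ring. Qed.

Lemma Cinv_involutive (x : C) : / / x = x.
Proof.
  destruct (Ceq_dec x 0) as [-> | Hx].
  - rewrite !Cinv_0. reflexivity.
  - field. exact Hx.
Qed.

Lemma Cinv_inj (x y : C) : / x = / y -> x = y.
Proof. intros H. rewrite <- (Cinv_involutive x), H. apply Cinv_involutive. Qed.

(* Also at zeros of [f], where [/ 0 = 0] makes the quotients vanish. *)
Lemma cross_quotient_eq_iff (f : C -> C) (z w : C) : z <> 0 -> w <> 0 ->
  z * (w / f w) = w * (z / f z) <-> f z = f w.
Proof.
  intros Hz Hw. unfold Cdiv. split.
  - intros H. apply Cinv_inj.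
    set (u := / f z) in *. set (v := / f w) in *.
    replace u with (/ (z * w) * (w * (z * u))) by (field; auto).
    rewrite <- H. field. auto.
  - intros ->. ring.
Qed.

Lemma Cmod_series_le (v : nat -> C) (l : C) (B : nat -> R) (L : R) :
  is_series v l -> is_series B L -> (forall k, Cmod (v k) <= B k) -> Cmod l <= L.
Proof.
  intros Hv HB Hle.
  assert (Hpartial : forall n, Cmod (sum_n v n) <= sum_n B n).
  { intros n. eapply Rle_trans; [apply (norm_sum_n_m v) | apply sum_n_m_le, Hle]. }
  assert (Hlim : is_lim_seq (fun n => Cmod (sum_n v n)) (Cmod l)).
  { eapply filterlim_comp; [exact Hv | apply (@filterlim_norm C_AbsRing C_NormedModule)]. }
  exact (is_lim_seq_le _ (sum_n B) _ L Hpartial Hlim HB).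
Qed.

Lemma sum_n_RtoC (v : nat -> R) (N : nat) :
  sum_n (fun n => RtoC (v n)) N = RtoC (sum_n v N).
Proof.
  induction N as [|N IH]; [rewrite !sum_O; reflexivity |].
  rewrite !sum_Sn, IH. unfold plus; simpl. symmetry. apply RtoC_plus.
Qed.

Lemma is_series_RtoC (v : nat -> R) (L : C) :
  is_series (fun n => RtoC (v n)) L -> is_series v (Re L) /\ L = RtoC (Re L).
Proof.
  intros HL.
  assert (Hcomp : forall p : C -> R, (forall x y, continuous p (x, y)) ->
            is_lim_seq (fun N => p (RtoC (sum_n v N))) (p L)).
  { intros p Hp. eapply filterlim_comp; [| destruct L; apply Hp].
    eapply filterlim_ext; [intros N; apply sum_n_RtoC | exact HL]. }
  split.
  - exact (Hcomp fst continuous_fst).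
  - pose proof (Hcomp snd continuous_snd) as Him.
    apply is_lim_seq_unique in Him. simpl in Him. rewrite Lim_seq_const in Him.
    destruct L as [x y]. simpl in *. injection Him as <-. reflexivity.
Qed.

Lemma Cmod_Cpow_sub_le (a c : C) (k : nat) : Cmod a <= 1 -> Cmod c <= 1 ->
  Cmod (Cpow a k - Cpow c k) <= INR k * Cmod (a - c).
Proof.
  intros Ha Hc. induction k as [|k IH].
  - simpl. replace (1 - 1) with (RtoC 0) by ring. rewrite Cmod_0. lra.
  - replace (Cpow a (S k) - Cpow c (S k))
      with (a * (Cpow a k - Cpow c k) + (a - c) * Cpow c k) by (simpl; ring).
    eapply Rle_trans; [apply Cmod_triangle |].
    rewrite !Cmod_mult, Cmod_pow, S_INR.
    assert (0 <= Cmod c ^ k <= 1).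
    { split; [apply pow_le, Cmod_ge_0 |].
      rewrite <- (pow1 k). apply pow_incr. split; [apply Cmod_ge_0 | exact Hc]. }
    pose proof (Cmod_ge_0 (a - c)). pose proof (Cmod_ge_0 a).
    pose proof (Cmod_ge_0 (Cpow a k - Cpow c k)).
    nra.
Qed.

Lemma zf_cross_term_le (b1 : C) (b : nat -> R) (z w : C) (k : nat) :
  (0 <= b (2 + k)%nat)%R -> Cmod z <= 1 -> Cmod w <= 1 ->
  Cmod (z * (zf_coef b1 b (2 + k) * Cpow w (2 + k))
        - w * (zf_coef b1 b (2 + k) * Cpow z (2 + k)))
    <= Cmod z * Cmod w * Cmod (z - w) * zf_weight b k.
Proof.
  intros Hbk Hz Hw.
  set (c := RtoC ((-1) ^ (2 + k) * b (2 + k)%nat)).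
  change (zf_coef b1 b (2 + k)) with c.
  replace (z * (c * Cpow w (2 + k)) - w * (c * Cpow z (2 + k)))
    with (c * (z * w) * (Cpow w (S k) - Cpow z (S k))) by (simpl; ring).
  assert (Hc : Cmod c = b (2 + k)%nat).
  { unfold c. rewrite Cmod_R, Rabs_mult, pow_1_abs, Rmult_1_l. apply Rabs_pos_eq, Hbk. }
  assert (Hwz : Cmod (w - z) = Cmod (z - w)).
  { rewrite <- Cmod_opp. f_equal. ring. }
  pose proof (Cmod_Cpow_sub_le w z (S k) Hw Hz) as Hpow. rewrite Hwz in Hpow.
  rewrite !Cmod_mult, Hc.
  unfold zf_weight. rewrite (Nat.add_comm k 2), (Nat.add_comm k 1).
  assert (Hcoef : 0 <= b (2 + k)%nat * (Cmod z * Cmod w))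
    by (apply Rmult_le_pos; [exact Hbk | apply Rmult_le_pos; apply Cmod_ge_0]).
  eapply Rle_trans; [apply (Rmult_le_compat_l _ _ _ Hcoef Hpow) |].
  right. simpl (1 + k)%nat. ring.
Qed.

Lemma zf_series_cross_le (b1 : C) (b : nat -> R) (z w gz gw : C) (S : R) :
  (forall n, (2 <= n)%nat -> (0 <= b n)%R) -> is_series (zf_weight b) S ->
  Cmod z <= 1 -> Cmod w <= 1 ->
  is_series (fun n => zf_coef b1 b n * Cpow z n) gz ->
  is_series (fun n => zf_coef b1 b n * Cpow w n) gw ->
  Cmod (z * gw - w * gz - (z - w)) <= Cmod z * Cmod w * Cmod (z - w) * S.
Proof.
  intros Hb HS Hz Hw Hgz Hgw.
  set (u := fun n => z * (zf_coef b1 b n * Cpow w n) - w * (zf_coef b1 b n * Cpow z n)).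
  assert (Hu : is_series u (z * gw - w * gz))
    by exact (is_series_minus _ _ _ _ (is_series_scal z _ _ Hgw) (is_series_scal w _ _ Hgz)).
  assert (Htail : is_series (fun k => u (2 + k)%nat) (z * gw - w * gz - (z - w))).
  { apply is_series_incr_n; [lia |].
    replace (plus _ _) with (z * gw - w * gz); [exact Hu |].
    simpl. rewrite sum_Sn, sum_O. unfold u, plus; simpl. ring. }
  apply (Cmod_series_le _ _ _ _ Htail (is_series_scal_l _ _ _ HS)).
  intros k. apply zf_cross_term_le; auto. apply Hb. lia.
Qed.

Lemma Cmod_continuous_of_cderiv (f : C -> C) (w l : C) : is_cderiv f w l ->
  forall eps : posreal, exists d : posreal,
    forall z, Cmod (z - w) < d -> Cmod (f z - f w) < eps.
Proof.
  intros Hd eps.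
  pose proof (@ex_derive_continuous C_AbsRing C_NormedModule f w (ex_intro _ l Hd)) as Hc.
  destruct (Hc _ (@locally_ball_norm C_AbsRing C_NormedModule (f w) eps)) as [d Hdl].
  exists d. exact Hdl.
Qed.

Section Sufficiency.

Variables (f : C -> C) (b1 : C) (b : nat -> R) (S : R).
Hypothesis f_classA : classA f.
Hypothesis b_nonneg : forall n, (2 <= n)%nat -> (0 <= b n)%R.
Hypothesis zf_expansion : forall z, in_disk z -> z <> 0 ->
  is_series (fun n => zf_coef b1 b n * Cpow z n) (z / f z).
Hypothesis weight_series : is_series (zf_weight b) S.
Hypothesis weight_sum_le_1 : (S <= 1)%R.

Lemma cross_quotient_le (z w : C) : in_disk z -> in_disk w -> z <> 0 -> w <> 0 ->
  Cmod (z * (w / f w) - w * (z / f z) - (z - w)) <= Cmod z * Cmod w * Cmod (z - w).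
Proof.
  intros Hz Hw Hz0 Hw0.
  eapply Rle_trans.
  - apply (zf_series_cross_le b1 b _ _ _ _ S); auto; unfold in_disk in *; lra.
  - rewrite <- (Rmult_1_r (Cmod z * Cmod w * Cmod (z - w))) at 2.
    apply Rmult_le_compat_l; [| exact weight_sum_le_1].
    repeat apply Rmult_le_pos; apply Cmod_ge_0.
Qed.

Lemma eq_of_image_eq (z w : C) : in_disk z -> in_disk w -> z <> 0 -> w <> 0 ->
  f z = f w -> z = w.
Proof.
  intros Hz Hw Hz0 Hw0 Hf.
  pose proof (cross_quotient_le z w Hz Hw Hz0 Hw0) as Hle.
  rewrite (proj2 (cross_quotient_eq_iff f z w Hz0 Hw0) Hf) in Hle.
  replace (w * (z / f z) - w * (z / f z) - (z - w)) with (- (z - w)) in Hle by ring.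
  rewrite Cmod_opp in Hle. unfold in_disk in *.
  assert (Hzw : Cmod (z - w) = 0%R).
  { pose proof (Cmod_ge_0 (z - w)). pose proof (Cmod_ge_0 z). pose proof (Cmod_ge_0 w).
    assert (Cmod z * Cmod w < 1) by nra. nra. }
  apply Cmod_eq_0 in Hzw.
  replace z with (z - w + w) by ring. rewrite Hzw. ring.
Qed.

Lemma Cmod_mul_le_near_root (z w : C) : in_disk z -> in_disk w -> z <> 0 -> w <> 0 ->
  z <> w -> f w = 0 -> Cmod z * Cmod w <= 2 * Cmod (z - w) * Cmod (f z).
Proof.
  intros Hz Hw Hz0 Hw0 Hzw Hfw.
  assert (Hfz0 : f z <> 0)
    by (intros Hfz; apply Hzw, eq_of_image_eq; auto; congruence).
  pose proof (cross_quotient_le z w Hz Hw Hz0 Hw0) as Hle.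
  rewrite Hfw, Cdiv_0_r in Hle.
  replace (z * 0 - w * (z / f z) - (z - w)) with (- (w * (z / f z) + (z - w))) in Hle by ring.
  rewrite Cmod_opp in Hle.
  assert (Hquot : Cmod (w * (z / f z)) <= 2 * Cmod (z - w)).
  { replace (w * (z / f z)) with (w * (z / f z) + (z - w) - (z - w)) by ring.
    eapply Rle_trans; [apply Cmod_triangle |]. rewrite Cmod_opp.
    unfold in_disk in *. pose proof (Cmod_ge_0 z). pose proof (Cmod_ge_0 w).
    pose proof (Cmod_ge_0 (z - w)).
    assert (Cmod z * Cmod w <= 1) by nra. nra. }
  replace (Cmod z * Cmod w)%R with (Cmod (w * (z / f z)) * Cmod (f z))%R
    by (rewrite <- !Cmod_mult; f_equal; field; exact Hfz0).
  apply Rmult_le_compat_r; [apply Cmod_ge_0 | exact Hquot].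
Qed.

(* By continuity [f z] is small near a zero [w], whereas the bound above makes
   [|f z| >= |z| |w| / (2 |z - w|)] large. *)
Lemma image_neq_0 (w : C) : in_disk w -> w <> 0 -> f w <> 0.
Proof.
  intros Hw Hw0 Hfw.
  destruct f_classA as [f_analytic _].
  destruct (f_analytic w Hw) as [l Hl].
  destruct (Cmod_continuous_of_cderiv f w l Hl (mkposreal 1 Rlt_0_1)) as [d Hd].
  assert (Hwpos : 0 < Cmod w) by (apply Cmod_gt_0; exact Hw0).
  unfold in_disk in Hw.
  set (t := Rmin (d / 2) (Cmod w / 4)).
  assert (Ht : 0 < t <= Cmod w / 4 /\ t <= d / 2)
    by (unfold t; pose proof (cond_pos d); repeat split;
        [apply Rmin_glb_lt; lra | apply Rmin_r | apply Rmin_l]).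
  set (z := w * RtoC (1 - t)).
  assert (Hzw : Cmod (z - w) = (Cmod w * t)%R).
  { unfold z. replace (w * RtoC (1 - t) - w) with (- (w * RtoC t))
      by (rewrite RtoC_minus; ring).
    rewrite Cmod_opp, Cmod_mult, Cmod_R, Rabs_pos_eq; lra. }
  assert (Hz : Cmod z = (Cmod w * (1 - t))%R)
    by (unfold z; rewrite Cmod_mult, Cmod_R, Rabs_pos_eq; lra).
  assert (Hz_disk : in_disk z) by (unfold in_disk; rewrite Hz; nra).
  assert (Hz0 : z <> 0) by (intros E; rewrite E, Cmod_0 in Hz; nra).
  assert (Hz_ne_w : z <> w)
    by (intros E; rewrite E in Hzw; replace (w - w) with (RtoC 0) in Hzw by ring;
        rewrite Cmod_0 in Hzw; nra).
  assert (Hfz_small : Cmod (f z) < 1).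
  { replace (f z) with (f z - f w) by (rewrite Hfw; ring).
    apply Hd. rewrite Hzw. pose proof (cond_pos d). nra. }
  pose proof (Cmod_mul_le_near_root z w Hz_disk Hw Hz0 Hw0 Hz_ne_w Hfw) as Hle.
  rewrite Hz, Hzw in Hle. pose proof (Cmod_ge_0 (f z)).
  assert (Cmod w * (1 - t) * Cmod w <= 2 * t * Cmod w) by nra.
  assert (Cmod w * (1 - t) <= 2 * t) by nra.
  nra.
Qed.

Lemma univalent_of_weight_sum_le_1 : univalent_in_disk f.
Proof.
  intros z w Hz Hw Hf.
  destruct f_classA as [_ [f_0 _]].
  destruct (Ceq_dec z 0) as [-> | Hz0]; destruct (Ceq_dec w 0) as [-> | Hw0]; auto.
  - exfalso. apply (image_neq_0 w Hw Hw0). congruence.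
  - exfalso. apply (image_neq_0 z Hz Hz0). congruence.
  - exact (eq_of_image_eq z w Hz Hw Hz0 Hw0 Hf).
Qed.

End Sufficiency.

Section RealAnalysis.
Local Open Scope R_scope.

Lemma exists_left_above_of_derive_neg (F : R -> R) (r L e : R) :
  is_derive F r L -> L < 0 -> 0 < e -> exists s, r - e < s < r /\ F r < F s.
Proof.
  intros HF HL He. apply is_derive_Reals in HF.
  destruct (HF (- L) ltac:(lra)) as [d Hd].
  set (h := Rmin (d / 2) (e / 2)).
  assert (Hh : 0 < h <= d / 2 /\ h <= e / 2)
    by (unfold h; pose proof (cond_pos d); repeat split;
        [apply Rmin_glb_lt; lra | apply Rmin_l | apply Rmin_r]).
  specialize (Hd (- h) ltac:(lra)
    ltac:(rewrite Rabs_Ropp, Rabs_pos_eq; pose proof (cond_pos d); lra)).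
  apply Rabs_def2 in Hd.
  exists (r + - h). split; [lra |].
  set (slope := (F (r + - h) - F r) / - h) in Hd.
  assert (F (r + - h) - F r = slope * - h) by (unfold slope; field; lra).
  nra.
Qed.

(* [t |-> t (1 + A r) - r (1 + A t)] vanishes at [r] and is negative at [0]; a
   negative slope at [r] would produce a second zero in [(0, r)]. *)
Lemma derive_le_of_cross_injective (A A' : R -> R) (r : R) : 0 < r ->
  (forall t, 0 <= t <= r -> is_derive A t (A' t)) -> A 0 = 0 ->
  (forall s, 0 < s < r -> s * (1 + A r) = r * (1 + A s) -> s = r) ->
  r * A' r - A r <= 1.
Proof.
  intros Hr HA HA0 Hinj. apply Rnot_lt_le. intros Hgt.
  set (F := fun t => t * (1 + A r) - r * (1 + A t)).
  assert (HF : forall t, 0 <= t <= r -> is_derive F t (1 + A r - r * A' t)).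
  { intros t Ht. unfold F. auto_derive; [exists (A' t); exact (HA t Ht) |].
    replace (Derive (fun x => A x) t) with (A' t) by (symmetry; apply is_derive_unique, HA, Ht).
    ring. }
  destruct (exists_left_above_of_derive_neg F r _ r (HF r ltac:(lra)) ltac:(lra) Hr)
    as [s1 [Hs1 HFs1]].
  assert (HFr : F r = 0) by (unfold F; ring).
  assert (HF0 : F 0 = - r) by (unfold F; rewrite HA0; ring).
  destruct (Ranalysis5.IVT_interv F 0 s1) as [s0 [Hs0 HFs0]]; [| lra | lra | lra |].
  { intros t Ht. apply continuity_pt_filterlim, (@ex_derive_continuous R_AbsRing R_NormedModule).
    exists (1 + A r - r * A' t). apply HF. lra. }
  assert (Hs0_ne_0 : s0 <> 0) by (intros E; rewrite E in HFs0; lra).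
  assert (s0 = r) by (apply Hinj; [lra | unfold F in HFs0; lra]).
  lra.
Qed.

Lemma pow_ge_1_sub_mul (e : R) (K : nat) : 0 <= e <= 1 -> 1 - INR K * e <= (1 - e) ^ K.
Proof.
  intros He. induction K as [|K IH]; [simpl; lra |].
  change ((1 - e) ^ S K) with ((1 - e) * (1 - e) ^ K). rewrite S_INR. pose proof (pos_INR K).
  assert (0 <= (1 - e) ^ K) by (apply pow_le; lra).
  nra.
Qed.

Lemma le_of_forall_pow_mul_le (x M : R) (K : nat) :
  (forall r, 0 < r < 1 -> r ^ K * x <= M) -> x <= M.
Proof.
  intros H. destruct (Rle_or_lt x 0) as [Hx | Hx].
  - specialize (H (/ 2) ltac:(lra)).
    assert ((/ 2) ^ K <= 1) by (rewrite <- (pow1 K); apply pow_incr; lra).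
    nra.
  - apply Rle_plus_epsilon. intros eps Heps.
    pose proof (pos_INR K).
    set (e := Rmin (/ 2) (eps / (INR K * x + 1))).
    assert (He : 0 < e <= / 2 /\ e * (INR K * x + 1) <= eps).
    { unfold e. repeat split.
      - apply Rmin_glb_lt; [lra | apply Rdiv_lt_0_compat; nra].
      - apply Rmin_l.
      - apply (Rmult_le_reg_r (/ (INR K * x + 1))); [apply Rinv_0_lt_compat; nra |].
        rewrite Rmult_assoc, Rinv_r by nra. rewrite Rmult_1_r. apply Rmin_r. }
    specialize (H (1 - e) ltac:(lra)).
    pose proof (pow_ge_1_sub_mul e K ltac:(lra)).
    nra.
Qed.

Lemma sum_n_nonneg (v : nat -> R) (N : nat) : (forall n, 0 <= v n) -> 0 <= sum_n v N.
Proof.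
  intros Hv. induction N as [|N IH]; [rewrite sum_O; apply Hv |].
  rewrite sum_Sn. unfold plus; simpl. pose proof (Hv (S N)). lra.
Qed.

Lemma pow_mul_sum_n_le (v : nat -> R) (r : R) (K N : nat) :
  (forall n, 0 <= v n) -> 0 <= r <= 1 ->
  r ^ (K + N) * sum_n v N <= sum_n (fun k => v k * r ^ (K + k)) N.
Proof.
  intros Hv Hr. induction N as [|N IH]; [rewrite !sum_O; lra |].
  rewrite !sum_Sn. unfold plus; simpl.
  rewrite <- plus_n_Sm. change (r ^ S (K + N)) with (r * r ^ (K + N)).
  pose proof (sum_n_nonneg v N Hv). pose proof (Hv (S N)).
  assert (0 <= r ^ (K + N)) by (apply pow_le; lra).
  assert (r * r ^ (K + N) * sum_n v N <= r ^ (K + N) * sum_n v N)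
    by (apply Rmult_le_compat_r; nra).
  nra.
Qed.

Lemma sum_n_le_of_is_series (v : nat -> R) (l : R) (N : nat) :
  (forall n, 0 <= v n) -> is_series v l -> sum_n v N <= l.
Proof.
  intros Hv Hl. apply is_lim_seq_incr_compare; [exact Hl |].
  intros n. rewrite sum_Sn. unfold plus; simpl. pose proof (Hv (S n)). lra.
Qed.

Lemma nonneg_series_le_of_sum_n_le (v : nat -> R) (M : R) :
  (forall n, 0 <= v n) -> (forall N, sum_n v N <= M) -> ex_series v /\ Series v <= M.
Proof.
  intros Hv HM.
  assert (Hincr : forall N, sum_n v N <= sum_n v (S N)).
  { intros N. rewrite sum_Sn. unfold plus; simpl. pose proof (Hv (S N)). lra. }
  destruct (ex_finite_lim_seq_incr _ M Hincr HM) as [l Hl].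
  split; [exists l; exact Hl |].
  rewrite (is_series_unique v l Hl).
  exact (is_lim_seq_le _ _ l M HM Hl (is_lim_seq_const M)).
Qed.

Lemma nonneg_series_le_of_abel_le (v : nat -> R) (G : R -> R) (K : nat) (M : R) :
  (forall n, 0 <= v n) ->
  (forall r, 0 < r < 1 -> is_series (fun k => v k * r ^ (K + k)) (G r)) ->
  (forall r, 0 < r < 1 -> G r <= M) ->
  ex_series v /\ Series v <= M.
Proof.
  intros Hv HG HGM. apply nonneg_series_le_of_sum_n_le; [exact Hv |].
  intros N. apply (le_of_forall_pow_mul_le _ _ (K + N)). intros r Hr.
  eapply Rle_trans; [apply pow_mul_sum_n_le; [exact Hv | lra] |].
  eapply Rle_trans; [apply (sum_n_le_of_is_series _ (G r)) | apply HGM, Hr].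
  - intros n. apply Rmult_le_pos; [apply Hv | apply pow_le; lra].
  - apply HG, Hr.
Qed.

End RealAnalysis.

Section Necessity.

Variables (f : C -> C) (b1 : C) (b : nat -> R).
Hypothesis b_nonneg : forall n, (2 <= n)%nat -> (0 <= b n)%R.
Hypothesis zf_expansion : forall z, in_disk z -> z <> 0 ->
  is_series (fun n => zf_coef b1 b n * Cpow z n) (z / f z).

Definition zf_tail (n : nat) : R := match n with 0%nat | 1%nat => 0%R | _ => b n end.

Lemma zf_neg_real (s : R) : (0 < s < 1)%R ->
  is_pseries zf_tail s (PSeries zf_tail s) /\
  RtoC (- s) / f (RtoC (- s)) = 1 - b1 * RtoC s + RtoC (PSeries zf_tail s).
Proof.
  intros Hs. set (z := RtoC (- s)).
  assert (Hz : in_disk z) by (unfold in_disk, z; rewrite Cmod_R, Rabs_Ropp, Rabs_pos_eq; lra).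
  assert (Hz0 : z <> 0) by (unfold z; intros E; apply (f_equal fst) in E; simpl in E; lra).
  set (T := z / f z - (1 - b1 * RtoC s)).
  assert (Htail : is_series (fun k => RtoC (zf_tail (2 + k) * s ^ (2 + k))) T).
  { apply (is_series_ext (fun k => zf_coef b1 b (2 + k) * Cpow z (2 + k))).
    - intros k. unfold z.
      change (zf_coef b1 b (2 + k)) with (RtoC ((-1) ^ (2 + k) * b (2 + k)%nat)).
      change (zf_tail (2 + k)) with (b (2 + k)%nat).
      rewrite <- RtoC_pow, <- RtoC_mult. f_equal.
      replace (- s)%R with (-1 * s)%R by ring. rewrite Rpow_mult_distr.
      replace ((-1) ^ (2 + k) * b (2 + k)%nat * ((-1) ^ (2 + k) * s ^ (2 + k)))%R
        with (b (2 + k)%nat * ((-1 * -1) ^ (2 + k)) * s ^ (2 + k))%R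
        by (rewrite Rpow_mult_distr; ring).
      replace (-1 * -1)%R with 1%R by ring. rewrite pow1. ring.
    - apply (is_series_incr_n (fun n => zf_coef b1 b n * Cpow z n) 2); [lia |].
      replace (plus T (sum_n _ (Init.Nat.pred 2))) with (z / f z)
        by (simpl; rewrite sum_Sn, sum_O; unfold T, z, plus; simpl;
            rewrite RtoC_opp; ring).
      exact (zf_expansion z Hz Hz0). }
  destruct (is_series_RtoC _ _ Htail) as [Hre HT].
  assert (Hps : is_pseries zf_tail s (Re T)).
  { apply is_pseries_R, (is_series_decr_n _ 2); [lia |].
    replace (plus (Re T) (opp (sum_n _ (Init.Nat.pred 2)))) with (Re T)
      by (simpl; rewrite sum_Sn, sum_O; unfold plus, opp; simpl; ring).
    exact Hre. }
  rewrite (is_pseries_unique _ _ _ Hps). split; [exact Hps |].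
  rewrite <- HT. unfold T. ring.
Qed.

Lemma zf_tail_radius (x : R) : (Rabs x < 1)%R -> Rbar_lt (Rabs x) (CV_radius zf_tail).
Proof.
  intros Hx. set (s := ((1 + Rabs x) / 2)%R).
  assert (Hs : (0 < s < 1)%R) by (unfold s; pose proof (Rabs_pos x); lra).
  assert (Hle : Rbar_le s (CV_radius zf_tail)).
  { apply Rbar_not_lt_le. intros Hlt.
    apply (CV_disk_outside zf_tail s); [rewrite Rabs_pos_eq; [exact Hlt | lra] |].
    apply ex_series_lim_0. eexists. apply is_pseries_R, (proj1 (zf_neg_real s Hs)). }
  eapply Rbar_lt_le_trans; [| exact Hle]. simpl. unfold s. lra.
Qed.

Lemma zf_tail_cross_injective (s r : R) : univalent_in_disk f ->
  (0 < s < 1)%R -> (0 < r < 1)%R ->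
  (s * (1 + PSeries zf_tail r) = r * (1 + PSeries zf_tail s))%R -> s = r.
Proof.
  intros Hu Hs Hr Hsr.
  set (z := RtoC (- s)). set (w := RtoC (- r)).
  assert (Hz : in_disk z) by (unfold in_disk, z; rewrite Cmod_R, Rabs_Ropp, Rabs_pos_eq; lra).
  assert (Hw : in_disk w) by (unfold in_disk, w; rewrite Cmod_R, Rabs_Ropp, Rabs_pos_eq; lra).
  assert (Hz0 : z <> 0) by (unfold z; intros E; apply (f_equal fst) in E; simpl in E; lra).
  assert (Hw0 : w <> 0) by (unfold w; intros E; apply (f_equal fst) in E; simpl in E; lra).
  assert (Hf : f z = f w).
  { apply (cross_quotient_eq_iff f z w Hz0 Hw0).
    unfold z, w. rewrite (proj2 (zf_neg_real r Hr)), (proj2 (zf_neg_real s Hs)).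
    apply (f_equal RtoC) in Hsr. rewrite !RtoC_mult, !RtoC_plus in Hsr.
    rewrite !RtoC_opp.
    replace (- RtoC s * (1 - b1 * RtoC r + RtoC (PSeries zf_tail r)))
      with (RtoC s * RtoC r * b1 - RtoC s * (RtoC 1 + RtoC (PSeries zf_tail r))) by ring.
    rewrite Hsr. ring. }
  pose proof (Hu z w Hz Hw Hf) as Ezw.
  apply (f_equal fst) in Ezw. simpl in Ezw. lra.
Qed.

Lemma zf_weight_abel_sum (r : R) : (0 < r < 1)%R ->
  is_series (fun k => zf_weight b k * r ^ (2 + k))%R
    (r * PSeries (PS_derive zf_tail) r - PSeries zf_tail r)%R.
Proof.
  intros Hr.
  assert (Hrad : Rbar_lt (Rabs r) (CV_radius zf_tail))
    by (apply zf_tail_radius; rewrite Rabs_pos_eq; lra).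
  pose proof (proj1 (is_pseries_R _ _ _)
    (PSeries_correct _ _ (ex_pseries_derive _ _ Hrad))) as Hderiv.
  pose proof (proj1 (is_pseries_R _ _ _) (proj1 (zf_neg_real r Hr))) as Hvalue.
  set (u := fun n => ((INR n - 1) * zf_tail n * r ^ n)%R).
  assert (Hu : is_series u (r * PSeries (PS_derive zf_tail) r - PSeries zf_tail r)%R).
  { assert (Hrderiv : is_series (fun n => INR n * zf_tail n * r ^ n)%R
                        (r * PSeries (PS_derive zf_tail) r)%R).
    { apply is_series_decr_1.
      replace (plus _ _) with (r * PSeries (PS_derive zf_tail) r)%R
        by (unfold plus, opp; simpl; ring).
      eapply is_series_ext; [| exact (is_series_scal_l r _ _ Hderiv)].
      intros n. unfold PS_derive, scal, mult; cbn -[INR zf_tail]. ring. }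
    eapply is_series_ext; [| exact (is_series_minus _ _ _ _ Hrderiv Hvalue)].
    intros n. unfold u, minus, plus, opp; simpl. ring. }
  assert (Hterm : forall k, u (2 + k)%nat = (zf_weight b k * r ^ (2 + k))%R).
  { intros k. unfold u, zf_weight. change (zf_tail (2 + k)) with (b (2 + k)%nat).
    rewrite (Nat.add_comm k 2), (Nat.add_comm k 1).
    replace (INR (2 + k)) with (INR (1 + k) + 1)%R by (rewrite <- S_INR; reflexivity).
    ring. }
  apply (is_series_ext _ _ _ Hterm), (is_series_incr_n u 2); [lia |].
  replace (plus _ _) with (r * PSeries (PS_derive zf_tail) r - PSeries zf_tail r)%R
    by (simpl; rewrite sum_Sn, sum_O; unfold u, plus; simpl; ring).
  exact Hu.
Qed.

Lemma zf_weight_abel_le_1 (r : R) : univalent_in_disk f -> (0 < r < 1)%R ->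
  (r * PSeries (PS_derive zf_tail) r - PSeries zf_tail r <= 1)%R.
Proof.
  intros Hu Hr.
  apply (derive_le_of_cross_injective (PSeries zf_tail) (PSeries (PS_derive zf_tail)));
    [lra | | | ].
  - intros t Ht. apply is_derive_PSeries, zf_tail_radius. rewrite Rabs_pos_eq; lra.
  - rewrite PSeries_0. reflexivity.
  - intros s Hs Hsr. apply (zf_tail_cross_injective s r Hu); [lra | lra | exact Hsr].
Qed.

Lemma weight_series_le_1_of_univalent : univalent_in_disk f ->
  ex_series (zf_weight b) /\ (Series (zf_weight b) <= 1)%R.
Proof.
  intros Hu.
  apply (nonneg_series_le_of_abel_le _
           (fun r => r * PSeries (PS_derive zf_tail) r - PSeries zf_tail r)%R 2).
  - intros n. apply Rmult_le_pos; [apply pos_INR | apply b_nonneg; lia].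
  - exact zf_weight_abel_sum.
  - intros r Hr. exact (zf_weight_abel_le_1 r Hu Hr).
Qed.

End Necessity.

Theorem theorem5p1 (f : C -> C) (b1 : C) (b : nat -> R) :
  classA f ->
  (forall n : nat, (2 <= n)%nat -> (0 <= b n)%R) ->
  (forall z : C, in_disk z -> z <> 0 ->
     is_series (fun n : nat => zf_coef b1 b n * Cpow z n) (z / f z)) ->
  (univalent_in_disk f <->
   (ex_series (fun n : nat => (INR (n + 1) * b (n + 2)%nat)%R) /\
    (Series (fun n : nat => (INR (n + 1) * b (n + 2)%nat)%R) <= 1)%R)).
Proof.
  intros HA Hb Hs. split.
  - exact (weight_series_le_1_of_univalent f b1 b Hb Hs).
  - intros [Hex HS].
    exact (univalent_of_weight_sum_le_1 f b1 b _ HA Hb Hs (Series_correct _ Hex) HS).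
Qed.
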